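(* Let $d\ge 3$. For $(i,j)\in\mathbb{Z}_d\times\mathbb{Z}_d$ with $i\neq 0$ define $$\mathcal{C}_{i,j}=\{(x,y)\in\mathbb{Z}_d\times\mathbb{Z}_d:\ iy-jx\equiv 0 \pmod d,\ x\in i\mathbb{Z}_d\},$$ where $i\mathbb{Z}_d=\{ik \bmod d: k\in\mathbb{Z}_d\}$, and define $\mathcal{C}_{0,0}=\{(0,y):y\in\mathbb{Z}_d\}$. Then: (1) for every $i\ne 0$ and every $j$, $\mathcal{C}_{i,j}$ is a maximally commutative set with exactly $d$ elements; (2) every maximally commutative set in $\mathbb{Z}_d\times\mathbb{Z}_d$ equals $\mathcal{C}_{0,0}$ or $\mathcal{C}_{i,j}$ for some $i\ne 0$; (3) the sets in $$\mathcal{MCS}_d=\{\mathcal{C}_{i,j}: 1\le i<d,\ i\mid d,\ 0\le j\le d/i-1\}\cup\{\mathcal{C}_{0,0}\}$$ are pairwise distinct and are exactly all the maximally commutative sets; in particular the number of maximally commutative sets is $\sigma(d)$, the sum of all positive divisors of $d$.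
   Context: $\mathbb{Z}_d=\{0,1,\dots,d-1\}$ with addition and multiplication mod $d$. Two pairs $(m,n),(m',n')\in\mathbb{Z}_d\times\mathbb{Z}_d$ are said to commute if $mn'-nm'\equiv 0 \pmod d$ (equivalently the generalized Pauli matrices $X^mZ^n$ and $X^{m'}Z^{n'}$ commute, where $X=\sum_i|i+1\bmod d\rangle\langle i|$, $Z=\sum_i e^{2\pi\sqrt{-1}i/d}|i\rangle\langle i|$). A subset $\mathcal{C}\subseteq\mathbb{Z}_d\times\mathbb{Z}_d$ is a maximally commutative set (MCS) if any two of its elements commute and no element of $(\mathbb{Z}_d\times\mathbb{Z}_d)\setminus\mathcal{C}$ commutes with every element of $\mathcal{C}$. $\sigma(d)=\sum_{k\mid d,\,k\ge1}k$. *)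

(* Z_d is represented by 'I_d with arithmetic mod d on nat. *)
From mathcomp Require Import all_boot.
Set Implicit Arguments. Unset Strict Implicit. Unset Printing Implicit Defensive.

Section Defs.
Variable d : nat.

Definition pt := ('I_d * 'I_d)%type.

(* (m,n) and (m',n') commute iff m n' - n m' = 0 (mod d), i.e. m n' = n m' (mod d) *)
Definition commb (p q : pt) : bool := (p.1 * q.2 == p.2 * q.1 %[mod d]).

Definition is_MCS (C : {set pt}) : bool :=
  [forall p in C, forall q in C, commb p q] &&
  [forall p, (p \notin C) ==> [exists q in C, ~~ commb p q]].

Definition iZ (i : 'I_d) : pred nat := fun x => [exists k : 'I_d, x == (i * k) %% d].

Definition Cij (i j : 'I_d) : {set pt} :=
  [set p : pt | (i * p.2 == j * p.1 %[mod d]) && iZ i p.1].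

Definition C00 : {set pt} := [set p : pt | p.1 == 0 :> nat].

Definition MCS_index : {set 'I_d * 'I_d} :=
  [set ij : 'I_d * 'I_d | [&& 0 < ij.1, ij.1 %| d & ij.2 < d %/ ij.1]].

Definition MCS_d : {set {set pt}} :=
  [set Cij ij.1 ij.2 | ij in MCS_index] :|: [set C00].

End Defs.

Definition sigma (n : nat) : nat := \sum_(k <- divisors n) k.

From mathcomp Require Import all_boot zify.

Set Implicit Arguments.
Unset Strict Implicit.
Unset Printing Implicit Defensive.

(* Commutation is bilinear, so a maximally commutative set C is closed under
   Z_d-linear combinations of its points.  If C is not C_{0,0}, let (g, j) be a
   point of C with least positive first coordinate g: Bezout and division with
   remainder show that g divides d and every first coordinate, so C is contained
   in, hence by maximality equal to, C_{g,j}, where j only matters modulo d/g.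
   Conversely C_{i,j} is maximal, since commuting with (i, j) and with
   (0, d/gcd(i,d)) already forces membership.  For i | d the points of C_{i,j}
   are the (i t, j t mod d/i + (d/i) s), so |C_{i,j}| = d, and the normalised
   indices number sum_{i | d, i < d} d/i = sigma(d) - 1. *)

Lemma is_MCSP d (C : {set pt d}) :
  is_MCS C <-> {in C &, forall p q, commb p q} /\
               (forall p, {in C, forall q, commb p q} -> p \in C).
Proof.
split=> [/andP[/forall_inP C_comm /forallP C_max] | [C_comm C_max]].
  split=> [p q pC qC | p p_comm]; first by have /forall_inP := C_comm p pC; apply.
  apply: contraT => pNC; have /existsP[q /andP[qC]] := implyP (C_max p) pNC.
  by rewrite p_comm.
apply/andP; split; first by apply/forall_inP=> p pC; apply/forall_inP=> q; apply: C_comm.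
apply/forallP=> p; apply/implyP; apply: contraR => /exists_inPn p_comm.
by apply: C_max => q /p_comm; rewrite negbK.
Qed.

Lemma MCS_subset_eq d (C D : {set pt d}) :
  is_MCS C -> {in D &, forall p q, commb p q} -> C \subset D -> C = D.
Proof.
case/is_MCSP=> _ C_max D_comm /subsetP CD; apply/setP=> p; apply/idP/idP=> [/CD //|pD].
by apply: C_max => q /CD; apply: D_comm.
Qed.

Lemma eqn_mod_pmul2r g a b e : 0 < g -> (a * g == b * g %[mod e * g]) = (a == b %[mod e]).
Proof. by move=> g_gt0; rewrite -!muln_modl eqn_pmul2r. Qed.

Lemma modnM_dvdr a b e g x : a = b %[mod e] -> g %| x -> a * x = b * x %[mod e * g].
Proof. by move=> ab /dvdnP[t ->]; rewrite !mulnA -!muln_modl -(modnMml a) ab modnMml. Qed.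

Lemma eqn_modMl_dvd i j x y m : 0 < i -> i %| m -> i %| x ->
  (i * y == j * x %[mod m]) = (y == j * (x %/ i) %[mod m %/ i]).
Proof.
move=> i_gt0 /divnK m_eq /divnK x_eq.
set e := m %/ i in m_eq *; set t := x %/ i in x_eq *.
by rewrite -m_eq -x_eq mulnA [i * y]mulnC eqn_mod_pmul2r.
Qed.

Lemma sum_divisors_ord m (F : nat -> nat) :
  0 < m -> \sum_(k <- divisors m) F k = \sum_(k < m.+1 | k %| m) F k.
Proof.
move=> m_gt0; rewrite -(big_mkord (fun k => k %| m) F) -[RHS]big_filter.
apply: perm_big; apply: uniq_perm; rewrite ?filter_uniq ?iota_uniq ?divisors_uniq // => k.
rewrite mem_filter mem_index_iota -dvdn_divisors //.
by case: (boolP (k %| m)) => // /dvdn_leq; rewrite ltnS => ->.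
Qed.

Lemma perm_divisors_div m :
  0 < m -> perm_eq (divisors m) [seq m %/ k | k <- divisors m].
Proof.
move=> m_gt0; have divK k : k \in divisors m -> m %/ (m %/ k) = k.
  by rewrite -dvdn_divisors // => k_dvd; rewrite divnA // mulKn.
have div_dvd k : k \in divisors m -> m %/ k \in divisors m.
  by rewrite -!dvdn_divisors // => /dvdn_div.
apply: uniq_perm; rewrite ?divisors_uniq //.
  rewrite map_inj_in_uniq ?divisors_uniq // => k k' k_div k'_div mkk'.
  by rewrite -(divK k k_div) mkk' divK.
move=> k; apply/idP/mapP=> [k_div | [k' /div_dvd + ->] //].
by exists (m %/ k); rewrite ?divK ?div_dvd.
Qed.

Lemma sigma_codivisors m : 0 < m -> sigma m = \sum_(k < m.+1 | k %| m) m %/ k.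
Proof.
move=> m_gt0; rewrite /sigma (perm_big _ (perm_divisors_div m_gt0)) big_map.
exact: sum_divisors_ord.
Qed.

Section MaximallyCommutativeSets.
Variable n : nat.
Local Notation d := n.+1.

Lemma val_inord_mod m : (inord (m %% d) : 'I_d) = m %% d :> nat.
Proof. by rewrite inordK // ltn_pmod. Qed.

Lemma iZE (i : 'I_d) x : x < d -> iZ i x = (gcdn i d %| x).
Proof.
move=> x_lt; rewrite /iZ; have [->|i_gt0] := posnP i.
  rewrite gcd0n; apply/existsP/idP=> [[k /eqP->] | dvd_x]; first by rewrite mul0n.
  by exists ord0; rewrite mul0n mod0n -(modn_small x_lt).
apply/existsP/idP=> [[k /eqP->] | /dvdnP[t x_eq]].
  by rewrite /dvdn modn_dvdm ?dvdn_gcdr // -/(dvdn _ _) dvdn_mulr ?dvdn_gcdl.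
have [u v uv_eq _] := egcdnP d i_gt0.
exists (inord (u * t %% d)); rewrite val_inord_mod modnMmr mulnA [i * u]mulnC uv_eq.
by rewrite mulnDl mulnAC modnMDl mulnC -x_eq modn_small.
Qed.

Lemma mem_Cij (i j : 'I_d) p :
  (p \in Cij i j) = (i * p.2 == j * p.1 %[mod d]) && (gcdn i d %| p.1).
Proof. by rewrite inE iZE. Qed.

Lemma Cij_commb (i j : 'I_d) : {in Cij i j &, forall p q, commb p q}.
Proof.
move=> [x y] [x' y']; rewrite !inE /commb /=.
(* with x = i k and x' = i k', both products are congruent to i j k k' *)
move=> /andP[/eqP ey /existsP[k /eqP ex]] /andP[/eqP ey' /existsP[k' /eqP ex']].
have -> : x * y' = k * j * (i * k') %[mod d].
  by rewrite ex modnMml -mulnA mulnCA -modnMmr ey' modnMmr mulnA ex' modnMmr.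
have -> : y * x' = k' * j * (i * k) %[mod d].
  by rewrite ex' modnMmr mulnA mulnC [y * i]mulnC -modnMmr ey modnMmr mulnA ex modnMmr.
by apply/eqP; congr (_ %% _); lia.
Qed.

Lemma Cij_self (i j : 'I_d) : (i, j) \in Cij i j.
Proof. by rewrite mem_Cij mulnC eqxx dvdn_gcdl. Qed.

Lemma Cij_maximal (i j : 'I_d) p : {in Cij i j, forall q, commb p q} -> p \in Cij i j.
Proof.
(* commuting with (0, d/g) forces g | p.1; commuting with (i, j) gives the congruence *)
move=> p_comm; set g := gcdn i d; have g_gt0 : 0 < g by rewrite gcdn_gt0 orbT.
have d_eq : d %/ g * g = d := divnK (dvdn_gcdr i d).
pose q : pt d := (ord0, inord (d %/ g %% d)).
have qC : q \in Cij i j.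
  rewrite mem_Cij val_inord_mod modnMmr muln0 mod0n dvdn0 andbT.
  by rewrite -(divnK (dvdn_gcdl i d)) -mulnA [g * _]mulnC d_eq modnMl.
have := p_comm q qC; rewrite /commb val_inord_mod modnMmr muln0 mod0n.
rewrite -[X in _ %% X]d_eq -/(dvdn _ _) mulnC dvdn_pmul2r => [g_dvd|]; last first.
  by rewrite divn_gt0 // dvdn_leq ?dvdn_gcdr.
have := p_comm _ (Cij_self i j); rewrite /commb /= => /eqP pij.
by rewrite mem_Cij g_dvd andbT [j * _]mulnC pij mulnC.
Qed.

Lemma Cij_MCS (i j : 'I_d) : is_MCS (Cij i j).
Proof. by apply/is_MCSP; split; [apply: Cij_commb | apply: Cij_maximal]. Qed.

Lemma C00_commb : {in C00 d &, forall p q, commb p q}.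
Proof. by move=> p q; rewrite !inE /commb => /eqP-> /eqP->; rewrite mul0n muln0. Qed.

Lemma C00_MCS : 0 < n -> is_MCS (C00 d).
Proof.
move=> n_gt0; apply/is_MCSP; split=> [|p p_comm]; first exact: C00_commb.
have := p_comm (ord0, inord 1); rewrite !inE /commb /= eqxx inordK // => /(_ isT)/eqP.
by rewrite muln1 muln0 mod0n modn_small => [->|].
Qed.

Definition pt_comb (a : nat) (p : pt d) (b : nat) (q : pt d) : pt d :=
  (inord ((a * p.1 + b * q.1) %% d), inord ((a * p.2 + b * q.2) %% d)).

Lemma commb_comb a b p q r : commb p r -> commb q r -> commb (pt_comb a p b q) r.
Proof.
rewrite /commb /= !val_inord_mod !modnMml !mulnDl -!mulnA => /eqP pr /eqP qr.
by rewrite -modnDm -(modnMmr a) -(modnMmr b) pr qr !modnMmr modnDm.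
Qed.

Lemma MCS_comb (C : {set pt d}) a b p q :
  is_MCS C -> p \in C -> q \in C -> pt_comb a p b q \in C.
Proof.
case/is_MCSP=> C_comm C_max pC qC; apply: C_max => r rC.
by apply: commb_comb; apply: C_comm.
Qed.

Lemma modn_addMpred a b : b <= a -> a + b * n = a - b %[mod d].
Proof. by move=> le_ba; rewrite -(modnMDl b (a - b)) mulnS; congr (_ %% _); lia. Qed.

Lemma MCS_min_first_dvd (C : {set pt d}) p0 :
  is_MCS C -> p0 \in C -> 0 < p0.1 -> {in C, forall q : pt d, 0 < q.1 -> p0.1 <= q.1} ->
  p0.1 %| d /\ {in C, forall q : pt d, p0.1 %| q.1}.
Proof.
move=> C_MCS p0C g_gt0 g_min; set g : nat := p0.1 in g_gt0 g_min *.
have first_comb a b p q : p \in C -> q \in C ->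
    exists2 z, z \in C & z.1 = (a * p.1 + b * q.1) %% d :> nat.
  by move=> pC qC; exists (pt_comb a p b q); rewrite ?MCS_comb ?val_inord_mod.
have gcd_gd : gcdn g d = g.
  (* gcd(g, d) = u g mod d is a positive first coordinate, so it is at least g *)
  have [u v uv_eq _] := egcdnP d g_gt0.
  have [z zC z1] := first_comb u 0 p0 p0 p0C p0C.
  rewrite -/g mul0n addn0 uv_eq modnMDl modn_small in z1; last first.
    by rewrite (leq_ltn_trans (dvdn_leq g_gt0 (dvdn_gcdl _ _))) ?ltn_ord.
  apply/eqP; rewrite eqn_leq dvdn_leq ?dvdn_gcdl //= -z1 g_min // z1.
  by rewrite gcdn_gt0 g_gt0.
split=> [|q qC]; first by rewrite -gcd_gd dvdn_gcdr.
(* q.1 %% g = q.1 - (q.1 %/ g) g is a first coordinate smaller than g *)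
have [z zC z1] := first_comb 1 (q.1 %/ g * n) q p0 qC p0C.
rewrite -/g mul1n mulnAC modn_addMpred ?leq_divM // {1}(divn_eq q.1 g) addKn in z1.
rewrite modn_small in z1; last by rewrite (ltn_trans (ltn_pmod _ _)) ?ltn_ord.
apply/eqP; apply: contraTeq (ltn_pmod q.1 g_gt0); rewrite -lt0n -z1 -leqNgt.
exact: g_min.
Qed.

Lemma Cij_congr (i j j' : 'I_d) : j = j' %[mod d %/ gcdn i d] -> Cij i j = Cij i j'.
Proof.
move=> jj'; apply/setP=> p; rewrite !mem_Cij.
have [g_dvd|] := boolP (gcdn i d %| p.1); last by rewrite !andbF.
by have := modnM_dvdr jj' g_dvd; rewrite divnK ?dvdn_gcdr // => ->.
Qed.

Lemma MCS_classification (C : {set pt d}) : is_MCS C ->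
  C = C00 d \/ exists2 ij, ij \in MCS_index d & C = Cij ij.1 ij.2.
Proof.
move=> C_MCS; have [/exists_inP[p pC p1_neq0] | /exists_inPn C_first0] :=
  boolP [exists p in C, p.1 != 0 :> nat]; last first.
  left; apply: MCS_subset_eq C_MCS C00_commb _.
  by apply/subsetP=> p /C_first0; rewrite negbK inE.
right; have first_pos : exists g, [exists p in C, (p.1 == g :> nat) && (0 < g)].
  by exists p.1; apply/exists_inP; exists p; rewrite ?eqxx ?lt0n.
have [_ /exists_inP[p0 p0C /andP[/eqP <- g_gt0]] g_min] := ex_minnP first_pos.
have [g_dvd_d g_dvd_first] : p0.1 %| d /\ {in C, forall q : pt d, p0.1 %| q.1}.
  apply: MCS_min_first_dvd => // q qC q_gt0; apply: g_min.
  by apply/exists_inP; exists q; rewrite ?eqxx.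
have gcd_gd : gcdn p0.1 d = p0.1 by apply/gcdn_idPl.
have [C_comm _] := (is_MCSP C).1 C_MCS.
have C_eq : C = Cij p0.1 p0.2.
  apply: (MCS_subset_eq C_MCS); first exact: Cij_commb.
  apply/subsetP=> q qC.
  have /eqP qp0 := C_comm q p0 qC p0C.
  by rewrite mem_Cij gcd_gd g_dvd_first // andbT mulnC -qp0 mulnC.
have e_gt0 : 0 < d %/ p0.1 by rewrite divn_gt0 // dvdn_leq.
have j0_lt : p0.2 %% (d %/ p0.1) < d by rewrite (leq_trans (ltn_pmod _ _)) ?leq_div.
exists (p0.1, inord (p0.2 %% (d %/ p0.1))).
  by rewrite inE /= inordK ?g_gt0 ?g_dvd_d ?ltn_pmod.
by rewrite C_eq; apply: Cij_congr; rewrite gcd_gd inordK ?modn_mod.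
Qed.

Lemma mem_Cij_dvd (i j : 'I_d) p : 0 < i -> i %| d ->
  (p \in Cij i j) = (i %| p.1) && (p.2 == j * (p.1 %/ i) %[mod d %/ i]).
Proof.
move=> i_gt0 i_dvd; rewrite mem_Cij (gcdn_idPl i_dvd) andbC.
by have [i_dvd_p1|//] := boolP (i %| p.1); rewrite eqn_modMl_dvd.
Qed.

Lemma card_Cij_dvd (i j : 'I_d) : 0 < i -> i %| d -> #|Cij i j| = d.
Proof.
move=> i_gt0 i_dvd; set e := d %/ i; have d_eq : e * i = d := divnK i_dvd.
have e_gt0 : 0 < e by rewrite divn_gt0 // dvdn_leq.
have first_lt (t : 'I_e) : i * t < d.
  by apply: leq_trans (eq_leq d_eq); rewrite mulnC ltn_pmul2r.
have second_lt (t : 'I_e) (s : 'I_i) : j * t %% e + e * s < d.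
  apply: leq_trans (eq_leq d_eq); have := ltn_pmod (j * t) e_gt0; have := ltn_ord s; nia.
pose sol (ts : 'I_e * 'I_i) : pt d := (inord (i * ts.1), inord (j * ts.1 %% e + e * ts.2)).
have sol_inj : injective sol.
  move=> [t s] [t' s'] [/(congr1 val) + /(congr1 val)]; rewrite /= !inordK //.
  move=> /eqP; rewrite eqn_pmul2l // => /eqP/val_inj tt'; subst t'.
  by move=> /eqP; rewrite eqn_add2l eqn_pmul2l // => /eqP/val_inj ->.
have -> : Cij i j = sol @: setT.
  apply/setP=> -[x y]; rewrite mem_Cij_dvd //=.
  apply/andP/imsetP=> [[/divnK x_eq /eqP y_mod]|].
    have t_lt : x %/ i < e by rewrite ltn_divLR // d_eq.
    have s_lt : y %/ e < i by rewrite ltn_divLR // mulnC d_eq.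
    exists (Ordinal t_lt, Ordinal s_lt) => //; congr pair; apply: val_inj.
      by rewrite /= inordK ?(first_lt (Ordinal t_lt)) // mulnC.
    rewrite /= inordK ?(second_lt (Ordinal t_lt) (Ordinal s_lt)) //.
    by rewrite -/e in y_mod; rewrite -y_mod addnC mulnC -divn_eq.
  move=> [[t s] _ [-> ->]]; rewrite /= !inordK // dvdn_mulr // mulKn //.
  by split; rewrite // -/e addnC mulnC modnMDl modn_mod.
by rewrite card_imset // cardsT card_prod !card_ord.
Qed.

Lemma Cij_neq_C00 (i j : 'I_d) : 0 < i -> Cij i j != C00 d.
Proof. by move=> i_gt0; apply: contraTneq (Cij_self i j) => ->; rewrite inE -lt0n. Qed.

Lemma card_Cij (i j : 'I_d) : 0 < i -> #|Cij i j| = d.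
Proof.
move=> i_gt0; have [C00_eq|[[g j'] ij'_index ->]] := MCS_classification (Cij_MCS i j).
  by have := Cij_neq_C00 j i_gt0; rewrite C00_eq eqxx.
by move: ij'_index; rewrite inE => /and3P[g_gt0 g_dvd _]; apply: card_Cij_dvd.
Qed.

Lemma Cij_index_inj :
  {in MCS_index d &, injective (fun ij : 'I_d * 'I_d => Cij ij.1 ij.2)}.
Proof.
move=> [i j] [i' j']; rewrite !inE /=.
move=> /and3P[i_gt0 i_dvd j_lt] /and3P[i'_gt0 i'_dvd j'_lt] eqC.
have i'_ij : (i, j) \in Cij i' j' by rewrite -eqC Cij_self.
have i_i'j' : (i', j') \in Cij i j by rewrite eqC Cij_self.
have ii' : i = i'.
  apply: val_inj; apply/eqP; rewrite eqn_dvd.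
  by move: i'_ij i_i'j'; rewrite !mem_Cij_dvd // => /andP[-> _] /andP[-> _].
subst i'; congr pair; apply: val_inj; move: i_i'j'.
by rewrite mem_Cij_dvd //= divnn i_gt0 muln1 !modn_small // => /andP[_ /eqP].
Qed.

Lemma card_MCS_index : #|MCS_index d| = \sum_(i < d | i %| d) d %/ i.
Proof.
rewrite -sum1_card; under eq_bigl do rewrite inE.
rewrite -(pair_big_dep xpredT (fun i j : 'I_d => [&& 0 < i, i %| d & j < d %/ i])
  (fun _ _ => 1)).
rewrite [RHS]big_mkcond; apply: eq_bigr => i _.
have [i_dvd|i_ndvd] := boolP (i %| d); last first.
  by rewrite big_pred0 // => j; rewrite andbF.
rewrite (dvdn_gt0 (ltn0Sn n) i_dvd).
by rewrite -(big_ord_widen _ (fun _ => 1) (leq_div d i)) sum1_card card_ord.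
Qed.

Lemma Cij_index_neq_C00 ij : ij \in MCS_index d -> Cij ij.1 ij.2 != C00 d.
Proof. by rewrite inE => /and3P[i_gt0 _ _]; apply: Cij_neq_C00. Qed.

Lemma mem_MCS_d (C : {set pt d}) : 0 < n -> (C \in MCS_d d) = is_MCS C.
Proof.
move=> n_gt0; apply/idP/idP=> [|C_MCS].
  by rewrite inE => /orP[/imsetP[ij _ ->] | /set1P->]; [apply: Cij_MCS | apply: C00_MCS].
rewrite inE; have [->|[ij ij_index ->]] := MCS_classification C_MCS.
  by rewrite set11 orbT.
by rewrite (imset_f (fun ij : 'I_d * 'I_d => Cij ij.1 ij.2)).
Qed.

Lemma card_MCS : 0 < n -> #|[set C : {set pt d} | is_MCS C]| = sigma d.
Proof.
move=> n_gt0; have -> : [set C | is_MCS C] = MCS_d d.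
  by apply/setP=> C; rewrite inE mem_MCS_d.
rewrite /MCS_d setUC cardsU1 card_in_imset; last exact: Cij_index_inj.
have -> : C00 d \notin [set Cij ij.1 ij.2 | ij in MCS_index d].
  by apply/imsetP=> -[ij /Cij_index_neq_C00 + C00_eq]; rewrite -C00_eq eqxx.
rewrite card_MCS_index sigma_codivisors // [RHS]big_mkcond big_ord_recr /= dvdnn divnn.
by rewrite -big_mkcond addnC.
Qed.
End MaximallyCommutativeSets.

Theorem theorem3 (d : nat) (hd : 3 <= d) :
  (forall i j : 'I_d, i != 0 :> nat ->
     is_MCS (Cij i j) /\ #|Cij i j| = d) /\
  (forall C : {set pt d}, is_MCS C ->
     C = C00 d \/ exists i j : 'I_d, i != 0 :> nat /\ C = Cij i j) /\
  ({in MCS_index d &, injective (fun ij : 'I_d * 'I_d => Cij ij.1 ij.2)} /\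
   (forall ij, ij \in MCS_index d -> Cij ij.1 ij.2 != C00 d) /\
   (forall C : {set pt d}, is_MCS C <-> C \in MCS_d d) /\
   #|[set C : {set pt d} | is_MCS C]| = sigma d).
Proof.
case: d hd => [//|n] /ltnW n_gt0.
split.
  by move=> i j; rewrite -lt0n => i_gt0; split; [apply: Cij_MCS | apply: card_Cij].
split.
  move=> C /MCS_classification[->|[[i j] ij_index ->]]; [by left | right].
  by exists i, j; move: ij_index; rewrite inE -lt0n => /andP[].
split; first exact: Cij_index_inj.
split; first exact: Cij_index_neq_C00.
split; last exact: card_MCS.
by move=> C; rewrite mem_MCS_d.
Qed.
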